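(* Let $\widetilde M$ be the $\mathbb Z_7\times\mathbb Z_7$ matrix with entries in $\mathbb Z_5$ given by $\widetilde M_{i,j}=0$ if $i+j\equiv0\pmod 7$, $\widetilde M_{i,j}=1$ if $i+j$ is a nonzero square modulo $7$, and $\widetilde M_{i,j}=3$ if $i+j$ is not a square modulo $7$. Let $C_0\subseteq\mathbb Z_5^7$ consist of the $7$ rows of $\widetilde M$, the $7$ rows of $-\widetilde M$ (entrywise negation modulo $5$), and the zero word. Then $|C_0|=15$, $C_0$ has minimum Lee distance at least $9$, $A^L_5(7,9)=15$, and every code $C\subseteq\mathbb Z_5^7$ with $|C|=15$ and minimum Lee distance at least $9$ is Lee equivalent to $C_0$.
   Context: For $u,v\in\mathbb Z_q^n$ (entries viewed as integers in $\{0,\dots,q-1\}$) the Lee distance is $d_L(u,v)=\sum_{i=1}^n\min\{|u_i-v_i|,\,q-|u_i-v_i|\}$. The minimum Lee distance of a code is the minimum of $d_L$ over distinct codewords. $A^L_q(n,d)$ is the maximum cardinality of a code $C\subseteq\mathbb Z_q^n$ with minimum Lee distance at least $d$. Let $D_q$ be the dihedral group of order $2q$, acting on $\mathbb Z_q$ by the maps $x\mapsto \pm x+c$ ($c\in\mathbb Z_q$); the group $D_q^n\rtimes S_n$ acts on $\mathbb Z_q^n$ by acting with an element of $D_q$ in each coordinate separately and permuting coordinates. Two codes $C,D\subseteq\mathbb Z_q^n$ are Lee equivalent if $g\cdot C=D$ for some $g\in D_q^n\rtimes S_n$. *)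

From mathcomp Require Import all_boot all_order all_algebra all_fingroup.
Set Implicit Arguments. Unset Strict Implicit. Unset Printing Implicit Defensive.
Import GRing.Theory.
Local Open Scope ring_scope.

Definition word (q n : nat) := {ffun 'I_n -> 'Z_q}.

Definition absdiff (a b : nat) : nat := (maxn a b - minn a b)%N.

Definition lee_dist (q n : nat) (u v : word q n) : nat :=
  (\sum_(i < n) minn (absdiff (val (u i)) (val (v i)))
                     (q - absdiff (val (u i)) (val (v i))))%N.

Definition min_lee_ge (q n : nat) (C : {set word q n}) (d : nat) : bool :=
  [forall x in C, forall y in C, (x != y) ==> (d <= lee_dist x y)%N].

Definition ALee (q n d : nat) : nat :=
  (\max_(C : {set word q n} | min_lee_ge C d) #|C|)%N.

Definition dih (q : nat) (s : bool) (c : 'Z_q) (x : 'Z_q) : 'Z_q :=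
  (if s then - x else x) + c.

(* Action of an element ((s_i, c_i)_i, sigma) of D_q^n x| S_n on Z_q^n *)
Definition lee_act (q n : nat) (s : 'I_n -> bool) (c : 'I_n -> 'Z_q)
  (sigma : {perm 'I_n}) (u : word q n) : word q n :=
  [ffun i => dih (s i) (c i) (u (sigma i))].

Definition lee_equiv (q n : nat) (C D : {set word q n}) : Prop :=
  exists (s : 'I_n -> bool) (c : 'I_n -> 'Z_q) (sigma : {perm 'I_n}),
    [set lee_act s c sigma u | u in C] = D.

Definition is_square7 (k : 'Z_7) : bool := [exists y : 'Z_7, y * y == k].

Definition Mt (i j : 'Z_7) : 'Z_5 :=
  let k := i + j in
  if k == 0 then 0 else if is_square7 k then 1 else 3.

Definition Mrow (i : 'Z_7) : word 5 7 := [ffun j : 'I_7 => Mt i (j : 'Z_7)].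
Definition Mrow_neg (i : 'Z_7) : word 5 7 := [ffun j : 'I_7 => - Mt i (j : 'Z_7)].

Definition C0 : {set word 5 7} :=
  [set Mrow i | i : 'Z_7] :|: [set Mrow_neg i | i : 'Z_7] :|: [set [ffun => 0]].

(* Upper bound (Plotkin-type double counting).  Summing the Lee distances over
   all ordered pairs of a code C of minimum distance 9 gives at least
   9 |C| (|C| - 1); summing column by column, a column with symbol counts
   n_0..n_4 contributes Q with 6 S^2 - 5 Q a sum of five squares, so at most
   7 * 6 |C|^2 / 5 in total.  Hence |C| <= 15, and when |C| = 15 the code is
   equidistant (all distances 9) and every symbol occurs 3 times per column.

   Uniqueness.  Using the Lee group, an optimal code is moved so that it contains
   the zero word and, after a sign-and-permutation normalization, one of two
   representatives rep1, rep2 of the weight-9 words with a zero coordinate.  A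
   complete search, driven by the tightness properties above, enumerates all
   optimal codes containing {0, rep}; for each of them an explicit group element
   mapping it onto C0 is found by computation and verified. *)
From Stdlib Require Import ZArith Lia.
From HB Require Import structures.
From mathcomp Require Import all_boot all_order all_algebra all_fingroup.
From mathcomp Require Import zify.
Set Implicit Arguments. Unset Strict Implicit. Unset Printing Implicit Defensive.

Section LeeGroup.
Import GRing.Theory.
Variables q n : nat.

Definition lee_coord (a b : 'Z_q) : nat :=
  minn (absdiff (val a) (val b)) (q - absdiff (val a) (val b)).

Lemma lee_dist_coord (u v : word q n) : lee_dist u v = \sum_i lee_coord (u i) (v i).
Proof. by []. Qed.

Lemma lee_dist_xx (u : word q n) : lee_dist u u = 0.
Proof.
by rewrite lee_dist_coord big1 // => i _; rewrite /lee_coord /absdiff maxnn minnn subnn min0n.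
Qed.

Lemma min_lee_geP (C : {set word q n}) d :
  reflect (forall x y, x \in C -> y \in C -> x != y -> d <= lee_dist x y) (min_lee_ge C d).
Proof.
apply: (iffP forallP) => [H x y xC yC xy | H x].
  by have /forall_inP/(_ y yC)/implyP := implyP (H x) xC; apply.
by apply/implyP=> xC; apply/forall_inP=> y yC; apply/implyP; apply: H.
Qed.

Lemma dih_comp (s s' : bool) (c c' x : 'Z_q) :
  dih s c (dih s' c' x) = dih (s (+) s') (dih s c c') x.
Proof.
by case: s; case: s'; rewrite /dih /= ?opprD ?opprK ?addrA // addrAC.
Qed.

Lemma dih_inj (s : bool) (c : 'Z_q) : injective (dih s c).
Proof. by case: s => x y /addIr //= /oppr_inj. Qed.

Lemma lee_act_comp s c (sg : {perm 'I_n}) s' c' (sg' : {perm 'I_n}) (u : word q n) :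
  lee_act s c sg (lee_act s' c' sg' u) =
  lee_act (fun i => s i (+) s' (sg i)) (fun i => dih (s i) (c i) (c' (sg i))) (sg * sg')%g u.
Proof. by apply/ffunP=> i; rewrite !ffunE permM dih_comp. Qed.

Lemma lee_act_inj s c (sg : {perm 'I_n}) : injective (@lee_act q n s c sg).
Proof.
move=> u v /ffunP E; apply/ffunP=> i.
by have := E (sg^-1 i)%g; rewrite !ffunE permKV => /dih_inj.
Qed.

Definition lee_img s c (sg : {perm 'I_n}) (C : {set word q n}) :=
  [set lee_act s c sg u | u in C].

Lemma card_lee_img s c sg C : #|lee_img s c sg C| = #|C|.
Proof. by rewrite card_imset //; exact: lee_act_inj. Qed.

Lemma lee_equiv_img s c sg (C D : {set word q n}) :
  lee_equiv (lee_img s c sg C) D -> lee_equiv C D.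
Proof.
case=> s' [c' [sg' <-]].
exists (fun i => s' i (+) s (sg' i)), (fun i => dih (s' i) (c' i) (c (sg' i))), (sg' * sg)%g.
by rewrite -imset_comp; apply: eq_imset => u /=; rewrite lee_act_comp.
Qed.

End LeeGroup.

(* A computational model of Z_5 and of words of Z_5^7 (as lists), on which the
   exhaustive searches below are run by the virtual machine. *)
Inductive z5 := Z0 | Z1 | Z2 | Z3 | Z4.

Definition z5_eqb (a b : z5) : bool :=
  match a, b with Z0, Z0 | Z1, Z1 | Z2, Z2 | Z3, Z3 | Z4, Z4 => true | _, _ => false end.
Lemma z5_eqP : Equality.axiom z5_eqb. Proof. by case; case; constructor. Qed.
HB.instance Definition _ := hasDecEq.Build z5 z5_eqP.

Definition zs : seq z5 := [:: Z0; Z1; Z2; Z3; Z4].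
Lemma mem_zs a : a \in zs. Proof. by case: a. Qed.

Definition z5_nat (a : z5) : nat :=
  match a with Z0 => 0 | Z1 => 1 | Z2 => 2 | Z3 => 3 | Z4 => 4 end.

Definition subz (a b : z5) : z5 :=
  match a, b with
  | Z0, Z0 | Z1, Z1 | Z2, Z2 | Z3, Z3 | Z4, Z4 => Z0
  | Z1, Z0 | Z2, Z1 | Z3, Z2 | Z4, Z3 | Z0, Z4 => Z1
  | Z2, Z0 | Z3, Z1 | Z4, Z2 | Z0, Z3 | Z1, Z4 => Z2
  | Z3, Z0 | Z4, Z1 | Z0, Z2 | Z1, Z3 | Z2, Z4 => Z3
  | _, _ => Z4
  end.
Definition negz (a : z5) : z5 := subz Z0 a.
Definition addz (a b : z5) : z5 := subz a (negz b).
Definition dihz (s : bool) (c x : z5) : z5 := addz (if s then negz x else x) c.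

Definition lz (a : z5) : nat := match a with Z0 => 0 | Z1 | Z4 => 1 | _ => 2 end.
Definition ldz (a b : z5) : nat := lz (subz a b).

Lemma ldz_dih s c a b : ldz (dihz s c a) (dihz s c b) = ldz a b.
Proof. by case: s; case: c; case: a; case: b. Qed.

(* Words of the model are lists over z5 (of length 7 where it matters). *)
Notation word7 := (seq z5).

Fixpoint dist (u v : word7) : nat :=
  if (u, v) is (a :: u', b :: v') then ldz a b + dist u' v' else 0.

Lemma dist_nth (u v : word7) : size u = size v ->
  dist u v = \sum_(k < size u) ldz (nth Z0 u k) (nth Z0 v k).
Proof.
elim: u v => [|a u IH] [|b v] //=; first by rewrite big_ord0.
by case=> /IH ->; rewrite big_ord_recl.
Qed.

Definition z5_of (a : 'Z_5) : z5 :=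
  match val a with 0 => Z0 | 1 => Z1 | 2 => Z2 | 3 => Z3 | _ => Z4 end.
Definition z_of (a : z5) : 'Z_5 := inZp (z5_nat a).

Lemma z5_ofK : cancel z5_of z_of.
Proof. by case=> [[|[|[|[|[|k]]]]] Hk]; apply/val_inj. Qed.
Lemma z_ofK : cancel z_of z5_of.
Proof. by case. Qed.

Lemma z5_of_eq (a : 'Z_5) v : (z5_of a == v) = (a == z_of v).
Proof. by rewrite -(can_eq z5_ofK) z_ofK. Qed.

Lemma z5_of_dih s c (a : 'Z_5) : z5_of (dih s (z_of c) a) = dihz s c (z5_of a).
Proof. by case: s; case: c; case: a => [[|[|[|[|[|k]]]]] Hk]. Qed.

Lemma z5_of_opp (a : 'Z_5) : z5_of (- a)%R = negz (z5_of a).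
Proof. by case: a => [[|[|[|[|[|k]]]]] Hk]. Qed.

Lemma lee_coordE (a b : 'Z_5) : lee_coord a b = ldz (z5_of a) (z5_of b).
Proof. by case: a => [[|[|[|[|[|k]]]]] Ha] //; case: b => [[|[|[|[|[|j]]]]] Hb]. Qed.

Definition enc (u : word 5 7) : word7 := [seq z5_of (u (inord k)) | k <- iota 0 7].

Lemma size_enc u : size (enc u) = 7. Proof. by rewrite size_map size_iota. Qed.

Lemma nth_enc u k : k < 7 -> nth Z0 (enc u) k = z5_of (u (inord k)).
Proof. by move=> lt_k7; rewrite (nth_map 0) ?size_iota ?nth_iota. Qed.

Lemma enc_inj : injective enc.
Proof.
move=> u v E; apply/ffunP=> i.
by rewrite -(z5_ofK (u i)) -(z5_ofK (v i)) -(inord_val i) -!nth_enc ?E.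
Qed.

Lemma lee_distE (u v : word 5 7) : lee_dist u v = dist (enc u) (enc v).
Proof.
rewrite lee_dist_coord dist_nth ?size_enc //; apply: eq_bigr => i _.
by rewrite lee_coordE !nth_enc // inord_val.
Qed.

Record cert := Cert { csign : seq bool; cshift : seq z5; cperm : seq nat }.

Definition actw (g : cert) (w : word7) : word7 :=
  [seq dihz (nth false (csign g) k) (nth Z0 (cshift g) k) (nth Z0 w (nth 0 (cperm g) k))
  | k <- iota 0 7].

Definition valid_cert (g : cert) : bool := perm_eq (cperm g) (iota 0 7).

Lemma cert_sem (g : cert) : valid_cert g ->
  exists s c (sg : {perm 'I_7}), forall u, enc (lee_act s c sg u) = actw g (enc u).
Proof.
move=> vg; have uniq_p : uniq (cperm g) by rewrite (perm_uniq vg) iota_uniq.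
have size_p : size (cperm g) = 7 by rewrite (perm_size vg) size_iota.
have p_lt k : k < 7 -> nth 0 (cperm g) k < 7.
  move=> lt_k7; have : nth 0 (cperm g) k \in iota 0 7 by rewrite -(perm_mem vg) mem_nth ?size_p.
  by rewrite mem_iota.
pose f (i : 'I_7) : 'I_7 := inord (nth 0 (cperm g) i).
have f_inj : injective f.
  move=> i j /(congr1 val); rewrite /= !inordK ?p_lt // => /eqP.
  by rewrite nth_uniq ?size_p // => /eqP /val_inj.
exists (fun i => nth false (csign g) i), (fun i => z_of (nth Z0 (cshift g) i)), (perm f_inj).
move=> u; apply/eq_in_map => k; rewrite mem_iota => /andP[_ lt_k7].
by rewrite ffunE permE z5_of_dih /f inordK // nth_enc ?p_lt.
Qed.

Lemma lee_act_iso s c (sg : {perm 'I_7}) (u v : word 5 7) :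
  lee_dist (lee_act s c sg u) (lee_act s c sg v) = lee_dist u v.
Proof.
rewrite !lee_dist_coord (reindex_inj (@perm_inj _ sg^-1)%g); apply: eq_bigr => i _.
by rewrite !ffunE permKV !lee_coordE -(z5_ofK (c _)) !z5_of_dih ldz_dih.
Qed.

Lemma min_lee_img s c sg (C : {set word 5 7}) d :
  min_lee_ge C d -> min_lee_ge (lee_img s c sg C) d.
Proof.
move/min_lee_geP=> H; apply/min_lee_geP=> _ _ /imsetP[u uC ->] /imsetP[v vC ->] neq.
by rewrite lee_act_iso; apply: H => //; apply: contra neq => /eqP->.
Qed.

Section Columns.
Variables q n : nat.
Implicit Types (C : {set word q n}) (i : 'I_n) (a b : 'Z_q).

Definition ncnt C i a : nat := #|[set x in C | x i == a]|.

Lemma ncnt_count C i a : ncnt C i a = count (fun x : word q n => x i == a) (enum C).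
Proof.
rewrite /ncnt cardE /enum_mem -size_filter -filter_predI.
by congr size; apply: eq_filter => u; rewrite !inE /= andbC.
Qed.

Lemma sum_by_value C i (G : 'Z_q -> nat) :
  \sum_(y in C) G (y i) = \sum_b ncnt C i b * G b.
Proof.
rewrite (partition_big (fun y : word q n => y i) xpredT) //=; apply: eq_bigr => b _.
rewrite (eq_bigr (fun _ => G b)); last by move=> y /andP[_ /eqP->].
by rewrite -sum_nat_const; apply: eq_bigl => y; rewrite inE.
Qed.

Lemma sum_ncnt C i : \sum_b ncnt C i b = #|C|.
Proof.
by rewrite -sum1_card (sum_by_value C i (fun=> 1)); apply: eq_bigr => b _; rewrite muln1.
Qed.

Definition dist_sum C : nat := \sum_(x in C) \sum_(y in C) lee_dist x y.
Definition col_sum C i : nat := \sum_a \sum_b ncnt C i a * ncnt C i b * lee_coord a b.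

Lemma dist_sum_columns C : dist_sum C = \sum_i col_sum C i.
Proof.
rewrite /dist_sum; under eq_bigr => x _ do rewrite exchange_big.
rewrite exchange_big; apply: eq_bigr => i _.
under eq_bigr => x _ do rewrite (sum_by_value C i (lee_coord (x i))).
rewrite (sum_by_value C i (fun a => \sum_b ncnt C i b * lee_coord a b)).
by apply: eq_bigr => a _; rewrite big_distrr; apply: eq_bigr => b _; exact: mulnA.
Qed.

Lemma row_sum_diag C x : x \in C ->
  \sum_(y in C) lee_dist x y = \sum_(y in C :\ x) lee_dist x y.
Proof. by move=> xC; rewrite (big_setD1 x xC) /= lee_dist_xx. Qed.

End Columns.

Lemma sum_leq_eq (I : finType) (P : pred I) (F G : I -> nat) :
  (forall i, P i -> F i <= G i) -> \sum_(i | P i) G i <= \sum_(i | P i) F i ->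
  forall i, P i -> F i = G i.
Proof.
move=> le_FG ge i Pi; apply/eqP; rewrite eqn_leq le_FG //= leqNgt; apply/negP => lt.
move: ge; rewrite leqNgt => /negP; apply.
rewrite (bigD1 i) //= [X in _ < X](bigD1 i) //= -addSn.
by apply: leq_add lt _; apply: leq_sum => j /andP[Pj _]; apply: le_FG.
Qed.

(* The quadratic form behind the Plotkin-type bound for Z_5: for a column with
   symbol counts n_0..n_4 (total S), the sum Q of Lee distances over ordered
   pairs satisfies 6 S^2 - 5 Q = a sum of five squares, so 5 Q <= 6 S^2 with
   equality only for the uniform distribution. *)
Section Lee5Form.
Local Open Scope Z_scope.

Lemma lee5_form_bound (n0 n1 n2 n3 n4 : Z) :
  let S := n0 + n1 + n2 + n3 + n4 in
  let Q := 2 * (n0*n1 + n1*n2 + n2*n3 + n3*n4 + n4*n0)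
           + 4 * (n0*n2 + n1*n3 + n2*n4 + n3*n0 + n4*n1) in
  5 * Q <= 6 * S * S /\
  (5 * Q = 6 * S * S -> 5 * n0 = S /\ 5 * n1 = S /\ 5 * n2 = S /\ 5 * n3 = S /\ 5 * n4 = S).
Proof.
move=> S Q.
have sos : 6 * S * S - 5 * Q =
  (n0 + n1 - 2*n3) * (n0 + n1 - 2*n3) + (n1 + n2 - 2*n4) * (n1 + n2 - 2*n4)
  + (n2 + n3 - 2*n0) * (n2 + n3 - 2*n0) + (n3 + n4 - 2*n1) * (n3 + n4 - 2*n1)
  + (n4 + n0 - 2*n2) * (n4 + n0 - 2*n2) by rewrite /S /Q; ring.
have := Z.square_nonneg (n0 + n1 - 2*n3); have := Z.square_nonneg (n1 + n2 - 2*n4).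
have := Z.square_nonneg (n2 + n3 - 2*n0); have := Z.square_nonneg (n3 + n4 - 2*n1).
have := Z.square_nonneg (n4 + n0 - 2*n2).
split=> [|E]; first by lia.
have [e0 [e1 [e2 [e3 e4]]]] :
  (n0 + n1 - 2*n3) * (n0 + n1 - 2*n3) = 0 /\ (n1 + n2 - 2*n4) * (n1 + n2 - 2*n4) = 0 /\
  (n2 + n3 - 2*n0) * (n2 + n3 - 2*n0) = 0 /\ (n3 + n4 - 2*n1) * (n3 + n4 - 2*n1) = 0 /\
  (n4 + n0 - 2*n2) * (n4 + n0 - 2*n2) = 0 by lia.
by move: e0 e1 e2 e3 e4; rewrite !Z.mul_eq_0 /S; lia.
Qed.

End Lee5Form.

Lemma col_form_bound (F : 'Z_5 -> nat) :
  5 * (\sum_a \sum_b F a * F b * lee_coord a b) <= 6 * (\sum_a F a) ^ 2 /\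
  (5 * (\sum_a \sum_b F a * F b * lee_coord a b) = 6 * (\sum_a F a) ^ 2 ->
   forall a, 5 * F a = \sum_a F a).
Proof.
rewrite !big_ord_recl !big_ord0 /lee_coord /= /bump /absdiff /maxn /minn /= !subnE /=.
set n0 := F ord0; set n1 := F (lift ord0 ord0); set n2 := F (lift ord0 (lift ord0 ord0)).
set n3 := F (lift ord0 (lift ord0 (lift ord0 ord0))).
set n4 := F (lift ord0 (lift ord0 (lift ord0 (lift ord0 ord0)))).
have [le eq_uniform] :=
  lee5_form_bound (Z.of_nat n0) (Z.of_nat n1) (Z.of_nat n2) (Z.of_nat n3) (Z.of_nat n4).
split=> [|E]; first by lia.
have {eq_uniform E} [e0 [e1 [e2 [e3 e4]]]] := eq_uniform ltac:(lia).
have F_val a : F a = nth 0 [:: n0; n1; n2; n3; n4] (val a).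
  by case: a => [[|[|[|[|[|k]]]]] Ha] //; congr F; apply/val_inj.
by move=> a; rewrite F_val; case: a => [[|[|[|[|[|k]]]]] Ha] //=; lia.
Qed.

Lemma col_sum_bound n (C : {set word 5 n}) i : 5 * col_sum C i <= 6 * #|C| ^ 2.
Proof. by rewrite -(sum_ncnt C i); case: (col_form_bound (ncnt C i)). Qed.


(* Double counting of the pairwise distances of a code of minimum distance 9:
   each row contributes at least 9 (|C| - 1), each column at most 6 |C|^2 / 5. *)
Lemma dist_sum_bounds (C : {set word 5 7}) : min_lee_ge C 9 ->
  #|C| * (9 * (#|C| - 1)) <= dist_sum C /\ 5 * dist_sum C <= 7 * (6 * #|C| ^ 2).
Proof.
move=> /min_lee_geP HC; split.
  rewrite -sum_nat_const /dist_sum; apply: leq_sum => x xC.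
  have -> : 9 * (#|C| - 1) = \sum_(y in C :\ x) 9.
    by rewrite sum_nat_const (cardsD1 x C) xC; lia.
  rewrite row_sum_diag //; apply: leq_sum => y; rewrite !inE => /andP[yx yC].
  by apply: HC; rewrite // eq_sym.
have -> : 7 * (6 * #|C| ^ 2) = \sum_(i < 7) 6 * #|C| ^ 2 by rewrite sum_nat_const card_ord.
rewrite dist_sum_columns big_distrr; apply: leq_sum => i _; exact: col_sum_bound.
Qed.

Lemma plotkin_bound (C : {set word 5 7}) : min_lee_ge C 9 -> #|C| <= 15.
Proof. by case/dist_sum_bounds; case: #|C| => [|m] // lower upper; nia. Qed.

(* In a code attaining the bound all the inequalities are tight. *)
Lemma optimal_dist_sum (C : {set word 5 7}) : #|C| = 15 -> min_lee_ge C 9 ->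
  dist_sum C = 1890.
Proof. by move=> HC /dist_sum_bounds; rewrite HC => -[lower upper]; lia. Qed.

(* An optimal code is equidistant: every row of the distance table is tight,
   and so is every entry of it. *)
Lemma optimal_equidistant (C : {set word 5 7}) : #|C| = 15 -> min_lee_ge C 9 ->
  forall x y, x \in C -> y \in C -> x != y -> lee_dist x y = 9.
Proof.
move=> HC HM; have Ssum := optimal_dist_sum HC HM; move/min_lee_geP: HM => HM.
have rows x : x \in C -> \sum_(y in C :\ x) 9 = \sum_(y in C :\ x) lee_dist x y.
  apply: (sum_leq_eq (P := fun z => z \in C) (F := fun z => \sum_(y in C :\ z) 9)
                     (G := fun z => \sum_(y in C :\ z) lee_dist z y)) => [z zC|].
    by apply: leq_sum => y; rewrite !inE => /andP[yz yC]; apply: HM; rewrite // eq_sym.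
  have -> : \sum_(z in C) \sum_(y in C :\ z) lee_dist z y = dist_sum C.
    by apply: eq_bigr => z zC; rewrite (row_sum_diag zC).
  rewrite (eq_bigr (fun=> 14 * 9)) => [|z zC]; first by rewrite sum_nat_const HC Ssum.
  by rewrite sum_nat_const; move: (cardsD1 z C); rewrite zC HC /=; lia.
move=> x y xC yC xy; symmetry.
apply: (sum_leq_eq (P := fun z => z \in C :\ x) (F := fun=> 9) (G := lee_dist x)
                   _ (eq_leq (esym (rows x xC)))) => [z|].
  by rewrite !inE => /andP[zx zC]; apply: HM; rewrite // eq_sym.
by rewrite !inE eq_sym xy.
Qed.

(* In an optimal code every column is tight, so every symbol occurs exactly 3
   times in every coordinate. *)
Lemma optimal_balanced (C : {set word 5 7}) : #|C| = 15 -> min_lee_ge C 9 ->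
  forall i a, ncnt C i a = 3.
Proof.
move=> HC HM; have Ssum := optimal_dist_sum HC HM.
have cols i : true -> 5 * col_sum C i = 6 * 15 ^ 2.
  apply: (sum_leq_eq (P := xpredT) (F := fun j => 5 * col_sum C j) (G := fun=> 6 * 15 ^ 2))
    => [j _|]; first by rewrite -HC col_sum_bound.
  by rewrite -[X in _ <= X]big_distrr /= -dist_sum_columns Ssum sum_nat_const card_ord.
move=> i a; have [_ uniform] := col_form_bound (ncnt C i).
by move: (uniform ltac:(by rewrite sum_ncnt HC cols) a); rewrite sum_ncnt HC; lia.
Qed.

Definition mtz (k : nat) : z5 := if k == 0 then Z0 else if k \in [:: 1; 2; 4] then Z1 else Z3.
Definition rowz (m : nat) : word7 := [seq mtz ((m + k) %% 7) | k <- iota 0 7].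
Definition zw : word7 := nseq 7 Z0.
Definition C0w : seq word7 :=
  [seq rowz m | m <- iota 0 7] ++ [seq map negz (rowz m) | m <- iota 0 7] ++ [:: zw].

Lemma is_square7E (k : 'Z_7) : is_square7 k = (val k \in [:: 0; 1; 2; 4]).
Proof.
apply/existsP/idP => [[y /eqP <-]|]; first by case: y => [[|[|[|[|[|[|[|y]]]]]]] Hy].
case: k => [[|[|[|[|[|[|[|k]]]]]]] Hk] //= _.
- by exists 0%R; apply/eqP/val_inj.
- by exists 1%R; apply/eqP/val_inj.
- by exists (inZp 3); apply/eqP/val_inj.
- by exists (inZp 2); apply/eqP/val_inj.
Qed.

Lemma z5_of_Mt (i j : 'Z_7) : z5_of (Mt i j) = mtz ((val i + val j) %% 7).
Proof.
rewrite /Mt -[(_ + _) %% 7]/(val (i + j)%R).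
by case: (i + j)%R => [[|[|[|[|[|[|[|k]]]]]]] Hk] //=; rewrite is_square7E.
Qed.

Lemma enc_Mrow (i : 'Z_7) : enc (Mrow i) = rowz (val i).
Proof.
apply/eq_in_map => k; rewrite mem_iota => /andP[_ lt_k7].
by rewrite ffunE z5_of_Mt /= inordK.
Qed.

Lemma enc_Mrow_neg (i : 'Z_7) : enc (Mrow_neg i) = map negz (rowz (val i)).
Proof.
rewrite /rowz -map_comp; apply/eq_in_map => k; rewrite mem_iota => /andP[_ lt_k7].
by rewrite ffunE z5_of_opp z5_of_Mt /= inordK.
Qed.

Lemma enc0 : enc [ffun=> 0%R] = zw.
Proof. by rewrite /enc; under eq_map do rewrite ffunE. Qed.

Lemma mem_enc_family (f : 'Z_7 -> word 5 7) (g : nat -> word7) :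
  (forall i, enc (f i) = g (val i)) ->
  forall w, (w \in [set f i | i : 'Z_7]) = (enc w \in [seq g m | m <- iota 0 7]).
Proof.
move=> fE w; apply/imsetP/mapP => [[i _ ->]|[m]].
  by exists (val i); rewrite ?fE // mem_iota ltn_ord.
rewrite mem_iota => /andP[_ lt_m7] E; exists (inZp m) => //.
by apply: enc_inj; rewrite fE E /= modn_small.
Qed.

Lemma mem_C0 w : (w \in C0) = (enc w \in C0w).
Proof.
rewrite /C0 !in_setU in_set1 !mem_cat (mem_enc_family enc_Mrow)
  (mem_enc_family (g := fun m => map negz (rowz m)) enc_Mrow_neg).
by rewrite mem_seq1 -enc0 (inj_eq enc_inj) orbA.
Qed.

Definition dec (x : word7) : word 5 7 := [ffun i : 'I_7 => z_of (nth Z0 x i)].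

Lemma decK x : size x = 7 -> enc (dec x) = x.
Proof.
move=> size_x; apply: (@eq_from_nth _ Z0); rewrite size_enc // => k lt_k7.
by rewrite nth_enc // ffunE inordK // z_ofK.
Qed.

Lemma encK : cancel enc dec.
Proof. by move=> w; apply: enc_inj; rewrite decK ?size_enc. Qed.

Lemma card_enc_preim (C : {set word 5 7}) (L : seq word7) :
  (forall w, (w \in C) = (enc w \in L)) -> uniq L -> all (fun x => size x == 7) L ->
  #|C| = size L.
Proof.
move=> memC uL /allP size7.
have memCL : C =i map dec L.
  move=> w; apply/idP/mapP => [|[x xL ->]].
    by rewrite memC => wL; exists (enc w); rewrite ?encK.
  by rewrite memC decK //; apply/eqP/size7.
rewrite (eq_card memCL) -(size_map dec); apply/card_uniqP.
rewrite map_inj_in_uniq // => x y /size7/eqP sx /size7/eqP sy E.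
by rewrite -(decK sx) -(decK sy) E.
Qed.

Definition min_dist_ge (L : seq word7) (d : nat) : bool :=
  all (fun a => all (fun b => (a == b) || (d <= dist a b)) L) L.

Lemma min_lee_enc (C : {set word 5 7}) (L : seq word7) d :
  (forall w, (w \in C) = (enc w \in L)) -> min_dist_ge L d -> min_lee_ge C d.
Proof.
move=> memC /allP minL; apply/min_lee_geP => x y; rewrite !memC => xL yL xy.
have /allP/(_ _ yL) := minL _ xL.
by rewrite (inj_eq enc_inj) (negbTE xy) lee_distE.
Qed.

Lemma C0w_facts : [&& uniq C0w, all (fun x => size x == 7) C0w & min_dist_ge C0w 9].
Proof. by vm_compute. Qed.

Lemma card_C0 : #|C0| = 15.
Proof. by case/and3P: C0w_facts => uC0 sC0 _; rewrite (card_enc_preim mem_C0). Qed.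

Lemma min_C0 : min_lee_ge C0 9.
Proof. by case/and3P: C0w_facts => _ _; apply: min_lee_enc mem_C0. Qed.

Lemma ALee_5_7_9 : ALee 5 7 9 = 15.
Proof.
apply/eqP; rewrite eqn_leq; apply/andP; split.
  by apply/bigmax_leqP => C; apply: plotkin_bound.
rewrite -{1}card_C0 /ALee.
exact: (@leq_bigmax_cond _ (fun C : {set word 5 7} => min_lee_ge C 9) (fun C => #|C|) C0 min_C0).
Qed.

(* An equidistant code in
   which every symbol occurs 3 times per coordinate is built word by word: at
   each step we pick a slot (coordinate i, symbol v) still used fewer than 3
   times, the one with the fewest remaining candidates, and branch over the
   candidates filling it. *)
Definition slot (p : nat * z5) (w : word7) : bool := nth Z0 w p.1 == p.2.

Definition tally (i : nat) (l : seq word7) : seq nat :=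
  foldr (fun w t => incr_nth t (z5_nat (nth Z0 w i))) (nseq 5 0) l.

Lemma tallyE i l a : nth 0 (tally i l) (z5_nat a) = count (slot (i, a)) l.
Proof.
elim: l => [|w l IH] /=; first by case: a.
rewrite nth_incr_nth IH /slot /=; congr (_ + _).
by move: (nth Z0 w i) => b; case: a {IH}; case: b.
Qed.

Definition open_slots (chosen cands : seq word7) : seq (nat * (nat * z5)) :=
  flatten [seq let tc := tally i cands in let tk := tally i chosen in
           [seq (nth 0 tc (z5_nat v), (i, v)) | v <- zs & nth 0 tk (z5_nat v) < 3]
          | i <- iota 0 7].

Lemma mem_open_slots chosen cands m i v : (m, (i, v)) \in open_slots chosen cands ->
  i < 7 /\ count (slot (i, v)) chosen < 3.
Proof.
case/flatten_mapP=> j; rewrite mem_iota => /andP[_ lt_j7] /mapP[u].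
by rewrite mem_filter tallyE => /andP[lt_u3 _] [_ -> ->].
Qed.

Lemma open_slots_mem chosen cands i v : i < 7 -> count (slot (i, v)) chosen < 3 ->
  (count (slot (i, v)) cands, (i, v)) \in open_slots chosen cands.
Proof.
move=> lt_i7 lt_v3; apply/flatten_mapP; exists i; first by rewrite mem_iota.
by apply/mapP; exists v; rewrite ?mem_filter ?tallyE ?lt_v3 ?mem_zs.
Qed.

Fixpoint best (A : Type) (s : seq (nat * A)) : option (nat * A) :=
  if s is x :: s' then
    Some (if best s' is Some y then (if y.1 < x.1 then y else x) else x)
  else None.

Lemma best_mem (A : eqType) (s : seq (nat * A)) x : best s = Some x -> x \in s.
Proof.
elim: s x => [|y s IH] x //= [<-].
case E: (best s) => [z|]; last exact: mem_head.
by case: ifP => _; rewrite in_cons ?(IH _ E) ?eqxx ?orbT.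
Qed.

Definition pick (chosen cands : seq word7) : option (nat * z5) :=
  omap snd (best (open_slots chosen cands)).

Lemma pick_some chosen cands p : pick chosen cands = Some p ->
  p.1 < 7 /\ count (slot p) chosen < 3.
Proof.
rewrite /pick; case E: best => [[m [i v]]|] //= [<-].
exact: mem_open_slots (best_mem E).
Qed.

Lemma pick_none chosen cands : pick chosen cands = None ->
  forall i v, i < 7 -> 3 <= count (slot (i, v)) chosen.
Proof.
rewrite /pick; case E: best => [//|] _ i v lt_i7; rewrite leqNgt; apply/negP => lt_v3.
by move: (open_slots_mem cands lt_i7 lt_v3); case: open_slots E.
Qed.

Lemma sum_slot_counts i l : \sum_(v <- zs) count (slot (i, v)) l = size l.
Proof.
elim: l => [|w l IH]; first by rewrite big1_seq.
by rewrite big_split /= IH !big_cons big_nil /slot /=; case: (nth Z0 w i).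
Qed.

(* Distinct words of an optimal code are at distance exactly 9. *)
Definition compat (x y : word7) : bool := dist x y == 9.

Fixpoint branch (rec : seq word7 -> seq word7 -> seq (seq word7))
    (chosen O S : seq word7) : seq (seq word7) :=
  if S is x :: S' then
    rec (x :: chosen) [seq y <- O ++ S' | compat x y] ++ branch rec chosen O S'
  else [::].

Fixpoint search (f : nat) (chosen cands : seq word7) : seq (seq word7) :=
  if size chosen == 15 then [:: chosen] else
  if f is f'.+1 then
    if pick chosen cands is Some p then
      branch (search f') chosen [seq w <- cands | ~~ slot p w] [seq w <- cands | slot p w]
    else [::]
  else [::].

Section SearchCompleteness.
(* A target code T with the properties of an optimal code (optimal_equidistant,
   optimal_balanced): the search reaches T from any state covering it. *)
Variable T : seq word7.
Hypothesis T_uniq : uniq T.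
Hypothesis T_size : size T = 15.
Hypothesis T_compat : {in T &, forall x y, x != y -> compat x y}.
Hypothesis T_balanced : forall i v, i < 7 -> count (slot (i, v)) T = 3.

(* The search state (chosen, cands) can still produce T. *)
Definition covers (chosen cands : seq word7) : Prop :=
  [/\ uniq chosen, {subset chosen <= T} & {in T, forall y, y \notin chosen -> y \in cands}].

Lemma covers_size chosen cands : covers chosen cands -> size chosen <= 15.
Proof. by case=> uc sub _; rewrite -T_size uniq_leq_size. Qed.

Lemma covers_full chosen cands : covers chosen cands -> 15 <= size chosen -> perm_eq chosen T.
Proof.
case=> uc sub _ big; apply: uniq_perm => //.
by case: (uniq_min_size uc sub); rewrite ?T_size.
Qed.

Lemma branch_complete rec chosen O S :
  (forall chosen' cands', covers chosen' cands' -> size chosen' = (size chosen).+1 ->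
     has (perm_eq^~ T) (rec chosen' cands')) ->
  covers chosen (O ++ S) -> has (fun y => (y \in T) && (y \notin chosen)) S ->
  has (perm_eq^~ T) (branch rec chosen O S).
Proof.
move=> Hrec [uc sub]; elim: S => [|x S IH] //= cov wit.
have cov' y : y \in T -> y \notin chosen -> y != x -> y \in O ++ S.
  by move=> yT yc yx; move: (cov y yT yc); rewrite !mem_cat in_cons (negbTE yx).
rewrite has_cat; case new_x: ((x \in T) && (x \notin chosen)); last first.
  apply/orP; right; apply: IH; last by rewrite new_x in wit.
  move=> y yT yc; apply: cov' => //; apply: contraFneq new_x => <-.
  by rewrite yT yc.
case/andP: new_x => xT xc; apply/orP; left; apply: Hrec => //; split.
- by rewrite /= xc.
- by move=> y; rewrite in_cons => /predU1P[->|/sub].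
- move=> y yT; rewrite in_cons negb_or => /andP[yx yc].
  by rewrite mem_filter cov' // andbT; apply: T_compat; rewrite // eq_sym.
Qed.

Lemma open_slot_witness chosen cands p : covers chosen cands -> p.1 < 7 ->
  count (slot p) chosen < 3 ->
  has (fun y => (y \in T) && (y \notin chosen)) [seq w <- cands | slot p w].
Proof.
case: p => i v [uc sub cc] /= lt_i7 lt_p3.
have : has (fun y => slot (i, v) y && (y \notin chosen)) T.
  apply/negPn/negP => /hasPn none.
  suff : count (slot (i, v)) T <= count (slot (i, v)) chosen by rewrite T_balanced // leqNgt lt_p3.
  rewrite -!size_filter uniq_leq_size ?filter_uniq // => y; rewrite !mem_filter.
  by case/andP=> sy yT; rewrite sy /=; move: (none y yT); rewrite sy negbK.
case/hasP=> y yT /andP[sy yc]; apply/hasP; exists y; last by rewrite yT yc.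
by rewrite mem_filter sy cc.
Qed.

Lemma search_complete f chosen cands : covers chosen cands -> 15 <= size chosen + f ->
  has (perm_eq^~ T) (search f chosen cands).
Proof.
elim: f chosen cands => [|f IH] chosen cands cov enough /=;
  case: eqP => [full|/eqP not_full]; try by rewrite /= (covers_full cov) ?full.
  by move: (covers_size cov) not_full enough; rewrite addn0; lia.
have lt15 : size chosen < 15 by rewrite ltn_neqAle not_full (covers_size cov).
case E: pick => [p|]; last first.
  have : \sum_(v <- zs) 3 <= \sum_(v <- zs) count (slot (0, v)) chosen.
    by apply: leq_sum => v _; apply: pick_none E _ _ _.
  by rewrite sum_slot_counts !big_cons big_nil leqNgt lt15.
have [lt_p7 lt_p3] := pick_some E.
apply: branch_complete; last exact: open_slot_witness cov lt_p7 lt_p3.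
  by move=> chosen' cands' cov' size'; apply: IH cov' _; rewrite size' addSnnS.
case: cov => uc sub cc; split=> // y yT yc; rewrite mem_cat !mem_filter.
by case: (slot p y); rewrite /= cc ?orbT.
Qed.

End SearchCompleteness.

Fixpoint words (n : nat) : seq word7 :=
  if n is n'.+1 then [seq a :: w | a <- zs, w <- words n'] else [:: [::]].

Lemma mem_words n w : size w = n -> w \in words n.
Proof.
elim: n w => [|n IH] [|a w] //= [size_w].
exact: (allpairs_f (fun a w => a :: w) (mem_zs a) (IH w size_w)).
Qed.

Definition W9 : seq word7 := [seq w <- words 7 | compat w zw].

(* Representatives of the words of weight 9 having a zero coordinate. *)
Definition rep1 : word7 := [:: Z2; Z2; Z2; Z1; Z1; Z1; Z0].
Definition rep2 : word7 := [:: Z2; Z2; Z2; Z2; Z1; Z0; Z0].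

Definition run (r : word7) := search 13 [:: r; zw] [seq w <- W9 | compat r w].

Lemma mem_enc_enum (D : {set word 5 7}) u : (enc u \in map enc (enum D)) = (u \in D).
Proof. by rewrite (mem_map enc_inj) mem_enum. Qed.

Lemma run_complete (D : {set word 5 7}) r : #|D| = 15 -> min_lee_ge D 9 ->
  r \in map enc (enum D) -> zw \in map enc (enum D) -> r != zw ->
  has (perm_eq^~ (map enc (enum D))) (run r).
Proof.
move=> HD HM rT zT rz.
have equidist := optimal_equidistant HD HM; have balanced := optimal_balanced HD HM.
have T_compat : {in map enc (enum D) &, forall x y, x != y -> compat x y}.
  move=> _ _ /mapP[u + ->] /mapP[v + ->]; rewrite !mem_enum => uD vD neq.
  by rewrite /compat -lee_distE equidist //; apply: contra neq => /eqP->.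
apply: search_complete => //.
- by rewrite map_inj_uniq ?enum_uniq //; exact: enc_inj.
- by rewrite size_map -cardE.
- move=> i v lt_i7; transitivity (ncnt D (inord i) (z_of v)); last exact: balanced.
  rewrite count_map ncnt_count.
  by apply: eq_count => u; rewrite /= /slot nth_enc // z5_of_eq.
split=> [|z|y yT]; first by rewrite /= inE rz.
  by rewrite !inE => /orP[]/eqP->.
rewrite !inE negb_or => /andP[yr yz].
rewrite mem_filter (T_compat r y) 1?eq_sym // mem_filter (T_compat y zw) // mem_words //.
by case/mapP: yT => u _ ->; exact: size_enc.
Qed.

(* A leaf L of the search is mapped onto
   C0w by a signed permutation of coordinates composed with the translation
   sending its "center" u to the zero word; the zero word is the only word of
   C0w meeting every other word in exactly 3 coordinates at Lee distance 2, so
   u is chosen with that property.  The coordinates are then assigned one by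
   one, keeping only partial images compatible with C0w. *)
Fixpoint far (u v : word7) : nat :=
  if (u, v) is (a :: u', b :: v') then (ldz a b == 2) + far u' v' else 0.

Definition is_center (L : seq word7) (u : word7) : bool :=
  all (fun w => (w == u) || (far u w == 3)) L.

Fixpoint ofind (A B : Type) (f : A -> option B) (s : seq A) : option B :=
  if s is x :: s' then (if f x is Some y then Some y else ofind f s') else None.

(* Target coordinate k is taken from source coordinate a`_k.1, negated iff a`_k.2. *)
Definition assignment := seq (nat * bool).

Definition shift_of (u : word7) (p : nat * bool) : z5 :=
  negz (if p.2 then negz (nth Z0 u p.1) else nth Z0 u p.1).

Definition partial_img (u : word7) (a : assignment) (w : word7) : word7 :=
  [seq dihz p.2 (shift_of u p) (nth Z0 w p.1) | p <- a].

Definition consistent (L : seq word7) (u : word7) (a : assignment) : bool :=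
  all (fun w => partial_img u a w \in [seq take (size a) c | c <- C0w]) L.

Definition choices : assignment := [seq (j, s) | j <- iota 0 7, s <- [:: false; true]].

Fixpoint extend (L : seq word7) (u : word7) (n : nat) (a : assignment) : option assignment :=
  if n is n'.+1 then
    ofind (fun p => if (p.1 \notin map fst a) && consistent L u (rcons a p)
                    then extend L u n' (rcons a p) else None) choices
  else Some a.

Definition cert_of (u : word7) (a : assignment) : cert :=
  Cert (map snd a) (map (shift_of u) a) (map fst a).

Definition find_cert (L : seq word7) : option cert :=
  ofind (fun u => if is_center L u then omap (cert_of u) (extend L u 7 [::]) else None) L.

(* The only property of a certificate the proof relies on, checked afterwards. *)
Definition maps_to_C0 (L : seq word7) (g : cert) : bool :=
  valid_cert g && all (fun x => actw g x \in C0w) L.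

Definition cert_ok (L : seq word7) : bool :=
  if find_cert L is Some g then maps_to_C0 L g else false.

Lemma cert_ok_equiv (D : {set word 5 7}) L : #|D| = 15 ->
  perm_eq L (map enc (enum D)) -> cert_ok L -> lee_equiv D C0.
Proof.
rewrite /cert_ok; case: find_cert => // g HD pL /andP[vg /allP L_C0].
have [s [c [sg Hs]]] := cert_sem vg.
exists s, c, sg; apply/eqP.
rewrite eqEcard -/(lee_img s c sg D) card_lee_img card_C0 HD leqnn andbT.
apply/subsetP => _ /imsetP[u uD ->]; rewrite mem_C0 Hs; apply: L_C0.
by rewrite (perm_mem pL) mem_enc_enum.
Qed.

Lemma leaves_ok : all (fun r => all cert_ok (run r)) [:: rep1; rep2].
Proof. vm_cast_no_check (erefl true). Qed.

(* Normalization of a word of weight 9 with a zero coordinate: list its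
   coordinates of Lee weight 2, then 1, then 0, making every entry 1 or 2.
   This signed permutation fixes the zero word. *)
Definition sortp (w : word7) : seq nat :=
  [seq i <- iota 0 7 | lz (nth Z0 w i) == 2] ++ [seq i <- iota 0 7 | lz (nth Z0 w i) == 1]
  ++ [seq i <- iota 0 7 | lz (nth Z0 w i) == 0].

Definition negative (a : z5) : bool := (a == Z3) || (a == Z4).

Definition normc (w : word7) : cert :=
  Cert [seq negative (nth Z0 w i) | i <- sortp w] (nseq 7 Z0) (sortp w).

Lemma normc_rep : all (fun w => (nth Z0 w 0 != Z0) ||
  [&& valid_cert (normc w), actw (normc w) w \in [:: rep1; rep2] & actw (normc w) zw == zw]) W9.
Proof. by vm_compute. Qed.

Lemma zero_in_translate (C : {set word 5 7}) x : x \in C ->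
  [ffun=> 0%R] \in lee_img (fun=> false) (fun i => - x i)%R 1%g C.
Proof.
move=> xC; apply/imsetP; exists x => //.
by apply/ffunP=> i; rewrite !ffunE perm1 /dih GRing.addrN.
Qed.

Lemma normalize_rep (C : {set word 5 7}) : #|C| = 15 -> min_lee_ge C 9 ->
  [ffun=> 0%R] \in C -> exists s c sg, exists2 r, r \in [:: rep1; rep2] &
    (r \in map enc (enum (lee_img s c sg C))) && (zw \in map enc (enum (lee_img s c sg C))).
Proof.
move=> HC HM zC.
have equidist := optimal_equidistant HC HM; have balanced := optimal_balanced HC HM.
have [y yC /andP[y0 ynz]] : exists2 y, y \in C & (y (inord 0) == 0%R) && (y != [ffun=> 0%R]).
  have two : #|[set x in C | x (inord 0) == 0%R] :\ [ffun=> 0%R]| = 2.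
    move: (balanced (inord 0) 0%R); rewrite /ncnt (cardsD1 [ffun=> 0%R]) inE zC ffunE eqxx.
    by case.
  have /card_gt0P[y] : 0 < #|[set x in C | x (inord 0) == 0%R] :\ [ffun=> 0%R]| by rewrite two.
  by rewrite !inE => /and3P[ynz yC y0]; exists y; rewrite // y0.
have yW9 : enc y \in W9.
  by rewrite mem_filter /compat -enc0 -lee_distE equidist // mem_words ?size_enc.
have := allP normc_rep _ yW9; rewrite nth_enc // (eqP y0) /= => /and3P[vg rep fix0].
have [s [c [sg Hs]]] := cert_sem vg.
exists s, c, sg, (actw (normc (enc y)) (enc y)) => //; apply/andP; split.
  by rewrite -Hs mem_enc_enum imset_f.
by rewrite -(eqP fix0) -enc0 -Hs mem_enc_enum imset_f.
Qed.

Lemma classify_normalized (D : {set word 5 7}) r : r \in [:: rep1; rep2] ->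
  #|D| = 15 -> min_lee_ge D 9 -> r \in map enc (enum D) -> zw \in map enc (enum D) ->
  lee_equiv D C0.
Proof.
move=> rep HD HM rD zD; have rz : r != zw by move: rep; rewrite !inE => /orP[]/eqP->.
case/hasP: (run_complete HD HM rD zD rz) => L LR pL.
by apply: cert_ok_equiv HD pL _; move/allP/(_ r rep)/allP: leaves_ok; apply.
Qed.

Lemma optimal_equiv_C0 (C : {set word 5 7}) : #|C| = 15 -> min_lee_ge C 9 -> lee_equiv C C0.
Proof.
move=> HC HM; have [x xC] : exists x, x \in C by apply/card_gt0P; rewrite HC.
apply: (lee_equiv_img (s := fun=> false) (c := fun i => (- x i)%R) (sg := 1%g)).
set C1 := lee_img _ _ _ C.
have HC1 : #|C1| = 15 by rewrite card_lee_img.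
have HM1 : min_lee_ge C1 9 by apply: min_lee_img.
have [s [c [sg [r rep /andP[rD zD]]]]] := normalize_rep HC1 HM1 (zero_in_translate xC).
apply: (lee_equiv_img (s := s) (c := c) (sg := sg)).
by apply: classify_normalized rep _ _ rD zD; rewrite ?card_lee_img ?min_lee_img.
Qed.

Theorem mainTheorem14 :
  #|C0| = 15%N /\ min_lee_ge C0 9 /\ ALee 5 7 9 = 15%N /\
  (forall C : {set word 5 7}, #|C| = 15%N -> min_lee_ge C 9 -> lee_equiv C C0).
Proof.
split; first exact: card_C0.
split; first exact: min_C0.
split; first exact: ALee_5_7_9.
exact: optimal_equiv_C0.
Qed.
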